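(* Let $\mathcal{H}$ be a complex Hilbert space, let $A\in\mathcal{B}(\mathcal{H})$ be a nonzero positive operator, and let $\mathbb{A}=\begin{pmatrix}A&O\\O&A\end{pmatrix}$ on $\mathcal{H}\oplus\mathcal{H}$. Let $P,Q,R,S\in\mathcal{B}_A(\mathcal{H})$. Then $$\omega_{\mathbb{A}}\left[\begin{pmatrix}P&Q\\R&S\end{pmatrix}\right]\geq\frac12\max\{\mu,\nu\},$$ where $\mu=\max\{\omega_A(Q+R+S+P),\ \omega_A(Q+R-S-P)\}$ and $\nu=\max\{\omega_A(Q-R+i(S+P)),\ \omega_A(Q-R-i(S+P))\}$.
   Context: For a positive operator $A$ on $\mathcal{H}$, $\langle x,y\rangle_A:=\langle Ax,y\rangle$ and $\|x\|_A:=\sqrt{\langle x,x\rangle_A}$. $\mathcal{B}_A(\mathcal{H})$ is the set of $T\in\mathcal{B}(\mathcal{H})$ with $\mathcal{R}(T^*A)\subseteq\mathcal{R}(A)$. $\omega_A(T):=\sup\{|\langle Tx,x\rangle_A|:x\in\mathcal{H},\|x\|_A=1\}$. $\omega_{\mathbb{A}}$ is defined analogously on $\mathcal{H}\oplus\mathcal{H}$ with $\langle (x_1,x_2),(y_1,y_2)\rangle_{\mathbb{A}}=\langle x_1,y_1\rangle_A+\langle x_2,y_2\rangle_A$. *)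

From HB Require Import structures.
From mathcomp Require Import all_boot all_order all_algebra.
From mathcomp Require Import all_classical all_reals ereal.
From mathcomp Require Export complex.
Set Implicit Arguments. Unset Strict Implicit. Unset Printing Implicit Defensive.
Import Order.TTheory GRing.Theory Num.Theory.
Local Open Scope ring_scope.
Local Open Scope classical_set_scope.

Section Hilbert.
Variables (R : realType) (H : lmodType R[i]).
Implicit Types (ip : H -> H -> R[i]) (T : H -> H).

Definition is_inner_product ip :=
  [/\ forall (a : R[i]) x y z, ip (a *: x + y) z = a * ip x z + ip y z,
      forall x y, ip y x = (ip x y)^*,
      forall x, 0 <= ip x x &
      forall x, ip x x = 0 -> x = 0].

Definition ipnorm ip (x : H) : R := Num.sqrt (complex.Re (ip x x)).

Definition ip_complete ip :=
  forall u : nat -> H,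
    (forall e : R, 0 < e -> exists N, forall m n, (N <= m)%N -> (N <= n)%N ->
        ipnorm ip (u m - u n) < e) ->
    exists l : H, forall e : R, 0 < e -> exists N, forall n, (N <= n)%N ->
        ipnorm ip (u n - l) < e.

Definition is_Hilbert ip := is_inner_product ip /\ ip_complete ip.

Definition bounded_op ip T :=
  (forall (a : R[i]) x y, T (a *: x + y) = a *: T x + T y) /\
  exists M : R, forall x, ipnorm ip (T x) <= M * ipnorm ip x.

Definition positive_op ip T := bounded_op ip T /\ forall x, 0 <= ip (T x) x.

Definition is_adjoint ip T Tadj := forall x y, ip (T x) y = ip x (Tadj y).

(* B_A(H): T in B(H) with R(T^* A) included in R(A) *)
Definition in_BA ip (A T : H -> H) :=
  bounded_op ip T /\
  exists Tadj, [/\ bounded_op ip Tadj, is_adjoint ip T Tadj &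
                   forall x, exists y, Tadj (A x) = A y].

Definition ipA ip (A : H -> H) x y := ip (A x) y.
Definition normA ip (A : H -> H) x : R := Num.sqrt (complex.Re (ipA ip A x x)).

Definition omegaA ip (A T : H -> H) : \bar R :=
  ereal_sup [set (Normc.normc (ipA ip A (T x) x))%:E | x in [set x | normA ip A x = 1]].

Definition ipAA ip (A : H -> H) (x y : H * H) := ipA ip A x.1 y.1 + ipA ip A x.2 y.2.
Definition normAA ip (A : H -> H) (x : H * H) : R :=
  Num.sqrt (complex.Re (ipAA ip A x x)).

Definition block_op (P Q R' S : H -> H) (x : H * H) : H * H :=
  (P x.1 + Q x.2, R' x.1 + S x.2).

Definition omegaAA ip (A : H -> H) (T : H * H -> H * H) : \bar R :=
  ereal_sup [set (Normc.normc (ipAA ip A (T x) x))%:E |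
             x in [set x | normAA ip A x = 1]].

End Hilbert.

(* Fix x with ||x||_A = 1 and c with |c| = 1.  The vector (x, c x)/sqrt 2 has
   AA-norm 1, and the AA-form of the block operator T = [[P, Q], [R', S]] there is
   1/2 (<Px,x> + c <Qx,x> + c^* <R'x,x> + <Sx,x>)_A = c/2 <F x, x>_A  with
   F = Q + c^*^2 R' + c^* (S + P).  Hence omega_A(F) <= 2 omega_AA(T), and
   c = 1, -1, -i, i give the four operators in mu and nu. *)

From HB Require Import structures.
From mathcomp Require Import all_boot all_order all_algebra.
From mathcomp Require Import all_classical all_reals ereal.
From mathcomp Require Import complex.
From mathcomp Require Import ring.
Import Order.TTheory GRing.Theory Num.Theory.
Local Open Scope ring_scope.

Section BlockOperatorNumericalRadius.
Variables (R : realType) (H : lmodType R[i]) (ip : H -> H -> R[i]).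
Hypothesis ip_linearl : forall (a : R[i]) x y z, ip (a *: x + y) z = a * ip x z + ip y z.
Hypothesis ip_conj_sym : forall x y, ip y x = (ip x y)^*.

Lemma ip0l z : ip 0 z = 0.
Proof.
have := ip_linearl 1 0 0 z; rewrite scaler0 addr0 mul1r => ip0D.
by apply: (addrI (ip 0 z)); rewrite addr0 -ip0D.
Qed.

Lemma ipDl x y z : ip (x + y) z = ip x z + ip y z.
Proof. by rewrite -[ip x z]mul1r -ip_linearl scale1r. Qed.

Lemma ipZl a x z : ip (a *: x) z = a * ip x z.
Proof. by rewrite -[a *: x]addr0 ip_linearl ip0l addr0. Qed.

Lemma ipZr a x z : ip z (a *: x) = a^* * ip z x.
Proof. by rewrite ip_conj_sym ipZl rmorphM [ip z x]ip_conj_sym. Qed.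

Lemma normc_normr (z : R[i]) : (Normc.normc z)%:C%C = `|z|.
Proof. by []. Qed.

Variables (A P Q R' S : {linear H -> H}).

Lemma ipAA_block_diag (s c : R[i]) x :
  ipAA ip A (block_op P Q R' S (s *: x, (s * c) *: x)) (s *: x, (s * c) *: x)
  = s * s^* * (ipA ip A (P x) x + c * ipA ip A (Q x) x
               + c^* * ipA ip A (R' x) x + c * c^* * ipA ip A (S x) x).
Proof.
rewrite /ipAA /ipA /block_op /= !linearZ /= !linearD !linearZ /=.
by rewrite !ipDl !ipZl !ipZr rmorphM; ring.
Qed.

Lemma normAA_diag (s c : R[i]) x : s * s^* = 2^-1 -> c * c^* = 1 ->
  normAA ip A (s *: x, (s * c) *: x) = normA ip A x.
Proof.
move=> ss cc; congr (Num.sqrt (complex.Re _)).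
rewrite /ipAA /ipA /= !linearZ /= !ipZl !ipZr rmorphM.
have -> : s * (s^* * ip (A x) x) + s * c * (s^* * c^* * ip (A x) x)
          = s * s^* * (1 + c * c^*) * ip (A x) x by ring.
by rewrite ss cc; field.
Qed.

Lemma omegaA_le_omegaAA (c : R[i]) (F : H -> H) : `|c| = 1 ->
  (forall x, F x = Q x + c^* ^+ 2 *: R' x + c^* *: (S x + P x)) ->
  (omegaA ip A F <= 2%:E * omegaAA ip A (block_op P Q R' S))%E.
Proof.
move=> c1 eF.
have c0 : c != 0 by rewrite -normr_eq0 c1 oner_eq0.
have cc : c * c^* = 1 by rewrite -normCK c1 expr1n.
have cV : c^* = c^-1 by rewrite invC_norm c1 expr1n invr1 mul1r.
pose s := sqrtC (2^-1 : R[i]).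
have ss : s * s^* = 2^-1.
  by rewrite geC0_conj ?sqrtC_ge0 ?invr_ge0 ?ler0n // -expr2 sqrtCK.
apply: ge_ereal_sup => _ [x /= Ax1 <-].
rewrite -lee_pdivrMl ?ltr0n // -EFinM.
apply: ereal_sup_ubound; exists (s *: x, (s * c) *: x); first by rewrite /= normAA_diag.
have quad : ipAA ip A (block_op P Q R' S (s *: x, (s * c) *: x)) (s *: x, (s * c) *: x)
            = 2^-1 * (c * ipA ip A (F x) x).
  rewrite ipAA_block_diag ss eF /ipA !linearD !linearZ /= !ipDl !ipZl cV.
  by field.
congr EFin; apply: complexI.
by rewrite rmorphM fmorphV rmorph_nat !normc_normr quad !normrM normfV normr_nat c1 mul1r.
Qed.

End BlockOperatorNumericalRadius.

Theorem theorem2p22 (R : realType) (H : lmodType R[i]) (ip : H -> H -> R[i])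
  (A P Q R' S : H -> H) :
  is_Hilbert ip ->
  positive_op ip A -> (exists x, A x != 0) ->
  in_BA ip A P -> in_BA ip A Q -> in_BA ip A R' -> in_BA ip A S ->
  let mu := maxe (omegaA ip A (fun x => Q x + R' x + S x + P x))
                 (omegaA ip A (fun x => Q x + R' x - S x - P x)) in
  let nu := maxe (omegaA ip A (fun x => Q x - R' x + 'i%C *: (S x + P x)))
                 (omegaA ip A (fun x => Q x - R' x - 'i%C *: (S x + P x))) in
  ((1/2)%:E * maxe mu nu <= omegaAA ip A (block_op P Q R' S))%E.
Proof.
move=> [[ip_lin ip_sym _ _] _] [[linA _] _] _ [[linP _] _] [[linQ _] _] [[linR _] _]
  [[linS _] _] /=.
pose lin f (f_lin : linear f) : {linear H -> H} :=
  HB.pack f (GRing.isLinear.Build _ _ _ _ f f_lin).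
have := @omegaA_le_omegaAA _ _ ip ip_lin ip_sym (lin A linA) (lin P linP) (lin Q linQ)
  (lin R' linR) (lin S linS); rewrite /= => le2.
rewrite div1r lee_pdivrMl ?ltr0n // !ge_max -!andbA; apply/and4P; split.
- by apply: (le2 1) => [|x]; rewrite ?normr1 // conjC1 expr1n !scale1r addrA.
- apply: (le2 (-1)) => [|x]; rewrite ?normrN1 //.
  by rewrite conjCN1 sqrrN expr1n scale1r scaleN1r opprD addrA.
- apply: (le2 (- 'i%C)) => [|x]; rewrite complexiE ?normrN ?normCi //.
  by rewrite rmorphN /= conjCi opprK sqrCi scaleN1r.
- apply: (le2 'i%C) => [|x]; rewrite complexiE ?normCi //.
  by rewrite conjCi sqrrN sqrCi scaleN1r scaleNr.
Qed.
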